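(* For every $k\in\{2,3,\dots\}\cup\{\infty\}$, the map $\overline{T_1}:\overline{\Omega}_k\to\overline{\Omega}_k$, $\overline{T_1}(\overline\gamma)=\overline{T_1(\gamma)}$ where $T_1(\gamma)(t)=\gamma(t+1)$, is well defined and is a homeomorphism of the metric space $(\overline{\Omega}_k,\rho_k)$.
   Context: PSVF conventions: switching manifold $\Sigma=\{y=0\}$; a PSVF $Z=(X,Y)$ uses $X$ on $\{y\ge0\}$, $Y$ on $\{y\le0\}$; trajectories follow the Filippov convention (off $\Sigma$ follow $X$ or $Y$; at crossing points, where the second components of $X$ and $Y$ have the same nonzero sign, pass through; at a regular tangency, i.e. a point of $\Sigma$ where a field is tangent to $\Sigma$ and which is not an invisible tangency of both fields, continue backward and forward along any of the flows of $X$, $Y$ or the sliding field); a global trajectory is a map $\gamma:\mathbb{R}\to\mathbb{R}^2$ which is a bi-infinite orientation-preserving concatenation of such local trajectories on intervals $[t_i,t_{i+1}]$ with $t_i\to\pm\infty$. Finite $k\ge2$: $P_k(x)=-\left(x+\frac{k-1}{2}\right)\left(x-\frac{k-1}{2}\right)\prod_{i=1}^{k-1}\left(x-\left(i-\frac k2\right)\right)^2$, $r_0=\frac{1-k}{2}$, $r_1=\frac{k-1}{2}$, $p_j=j-\frac k2$ ($j=1,\dots,k-1$), $Z_k$: $(1,P_k'(x))$ on $y\ge0$, $(-1,P_k'(x))$ on $y\le0$; $\Lambda_k=\{(x,\pm P_k(x)):r_0\le x\le r_1\}$; arcs $I_0=\{(x,\pm P_k(x)):r_0\le x<p_1\}$,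 $I_{2j-1}=\{(x,P_k(x)):p_j<x<p_{j+1}\}$, $I_{2j}=\{(x,-P_k(x)):p_j<x<p_{j+1}\}$ ($j=1,\dots,k-2$), $I_{2k-3}=\{(x,\pm P_k(x)):p_{k-1}<x\le r_1\}$. Case $k=\infty$: $p_j=j$ ($j\in\mathbb{Z}$), $Z_\infty$: $(1,2\sin(2\pi x))$ on $y\ge0$, $(-1,2\sin(2\pi x))$ on $y\le0$; $P_\infty(x)=\frac{1-\cos(2\pi x)}{\pi}$, $\Lambda_\infty=\{(x,\pm P_\infty(x)):x\in\mathbb{R}\}$; arcs $I_{2j}=\{(x,P_\infty(x)):j<x<j+1\}$, $I_{2j+1}=\{(x,-P_\infty(x)):j<x<j+1\}$. In both cases: $\Omega_k$ is the set of global trajectories $\gamma$ of $Z_k$ with $\gamma(0)\in\Lambda_k$; the itinerary $s(\gamma)_j=n$ if $\gamma(j)\in I_n$ and $s(\gamma)_j=m$ if $\gamma(j)=(p_l,0)$ for some $l$ and $\gamma(j+\frac12)\in I_m$; $\gamma_1\sim\gamma_2$ iff $s(\gamma_1)=s(\gamma_2)$, $\overline\Omega_k=\Omega_k/\sim$. Each class has a representative $\gamma^*$ with $\gamma^*(0)\in\{(p_l,0)\}$; $\rho_k(\overline\gamma_1,\overline\gamma_2)=\sum_{i\in\mathbb{Z}}2^{-|i|}d_H(\gamma_1^*([i,i+1]),\gamma_2^*([i,i+1]))$, $d_H$ the Hausdorff distance, $\gamma_i^*$ such representatives. *)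

From Stdlib Require Import Reals Lra Lia ZArith ClassicalEpsilon.
From Coquelicot Require Import Coquelicot.
Open Scope R_scope.

Definition pt := (R * R)%type.

Record PSVF := mkPSVF { FX : pt -> pt ; FY : pt -> pt }.

Definition onSigma (q : pt) : Prop := snd q = 0.

Definition dx2 (F : pt -> pt) (q : pt) : R := Derive (fun x => snd (F (x, snd q))) (fst q).
Definition dy2 (F : pt -> pt) (q : pt) : R := Derive (fun y => snd (F (fst q, y))) (snd q).
(* second Lie derivative of h(x,y)=y along F *)
Definition lie2 (F : pt -> pt) (q : pt) : R :=
  fst (F q) * dx2 F q + snd (F q) * dy2 F q.

(* X acts on {y >= 0}: invisible fold when X h = 0, X^2 h < 0 *)
Definition invisible_X (Z : PSVF) (q : pt) : Prop :=
  onSigma q /\ snd (FX Z q) = 0 /\ lie2 (FX Z) q < 0.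
(* Y acts on {y <= 0}: invisible fold when Y h = 0, Y^2 h > 0 *)
Definition invisible_Y (Z : PSVF) (q : pt) : Prop :=
  onSigma q /\ snd (FY Z q) = 0 /\ lie2 (FY Z) q > 0.

Definition crossing (Z : PSVF) (q : pt) : Prop :=
  onSigma q /\ snd (FX Z q) * snd (FY Z q) > 0.

Definition sliding (Z : PSVF) (q : pt) : Prop :=
  onSigma q /\ snd (FX Z q) * snd (FY Z q) < 0.

Definition regular_tangency (Z : PSVF) (q : pt) : Prop :=
  onSigma q /\ (snd (FX Z q) = 0 \/ snd (FY Z q) = 0) /\
  ~ (invisible_X Z q /\ invisible_Y Z q).

(* Filippov sliding vector field (Y2 X - X2 Y)/(Y2 - X2) *)
Definition sliding_field (Z : PSVF) (q : pt) : pt :=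
  let X := FX Z q in let Y := FY Z q in
  ((snd Y * fst X - snd X * fst Y) / (snd Y - snd X),
   (snd Y * snd X - snd X * snd Y) / (snd Y - snd X)).

Definition integral_curve (F : pt -> pt) (g : R -> pt) (a b : R) : Prop :=
  forall t, a < t < b ->
    is_derive (fun s => fst (g s)) t (fst (F (g t))) /\
    is_derive (fun s => snd (g s)) t (snd (F (g t))).

(* local trajectory on [a,b] (g is globally continuous, see below) *)
Definition local_piece (Z : PSVF) (g : R -> pt) (a b : R) : Prop :=
  (integral_curve (FX Z) g a b /\ forall t, a <= t <= b -> 0 <= snd (g t)) \/
  (integral_curve (FY Z) g a b /\ forall t, a <= t <= b -> snd (g t) <= 0) \/
  (integral_curve (sliding_field Z) g a b /\ forall t, a <= t <= b -> sliding Z (g t)).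

Definition junction_ok (Z : PSVF) (q : pt) : Prop :=
  onSigma q -> crossing Z q \/ regular_tangency Z q \/ sliding Z q.

Definition global_trajectory (ZZ : PSVF) (g : R -> pt) : Prop :=
  (forall t, continuous (fun s => fst (g s)) t /\ continuous (fun s => snd (g s)) t) /\
  exists tt : Z -> R,
    (forall i, tt i < tt (Z.succ i)) /\
    (forall M, exists i, M < tt i) /\
    (forall M, exists i, tt i < M) /\
    (forall i, local_piece ZZ g (tt i) (tt (Z.succ i))) /\
    (forall i, junction_ok ZZ (g (tt i))).

(** * The family Z_k; k = Some n (n >= 2) is finite k, k = None is k = infinity *)
Definition valid_k (k : option nat) : Prop :=
  match k with Some n => (2 <= n)%nat | None => True end.

Fixpoint prodR (n : nat) (g : nat -> R) : R :=
  match n with O => 1 | S m => prodR m g * g (S m) end.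

Definition pfin (n : nat) (j : nat) : R := INR j - INR n / 2.
Definition r0 (n : nat) : R := (1 - INR n) / 2.
Definition r1 (n : nat) : R := (INR n - 1) / 2.

Definition Pfin (n : nat) (x : R) : R :=
  - ((x + (INR n - 1) / 2) * (x - (INR n - 1) / 2)) *
  prodR (n - 1) (fun i => (x - pfin n i) ^ 2).

Definition Pinf (x : R) : R := (1 - cos (2 * PI * x)) / PI.

Definition Pk (k : option nat) (x : R) : R :=
  match k with Some n => Pfin n x | None => Pinf x end.

Definition fk (k : option nat) (x : R) : R :=
  match k with
  | Some n => Derive (Pfin n) x
  | None => 2 * sin (2 * PI * x)
  end.

Definition Zk (k : option nat) : PSVF :=
  mkPSVF (fun q => (1, fk k (fst q))) (fun q => (-1, fk k (fst q))).

Definition on_graph (k : option nat) (q : pt) : Prop :=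
  snd q = Pk k (fst q) \/ snd q = - Pk k (fst q).

Definition Lambda (k : option nat) (q : pt) : Prop :=
  match k with
  | Some n => r0 n <= fst q <= r1 n /\ on_graph k q
  | None => on_graph k q
  end.

Definition arc (k : option nat) (m : Z) (q : pt) : Prop :=
  let x := fst q in let y := snd q in
  match k with
  | Some n =>
      (m = 0%Z /\ r0 n <= x < pfin n 1 /\ on_graph k q) \/
      (m = (2 * Z.of_nat n - 3)%Z /\ pfin n (n - 1) < x <= r1 n /\ on_graph k q) \/
      (exists j : nat, (1 <= j <= n - 2)%nat /\ pfin n j < x < pfin n (S j) /\
         ((m = (2 * Z.of_nat j - 1)%Z /\ y = Pfin n x) \/
          (m = (2 * Z.of_nat j)%Z /\ y = - Pfin n x)))
  | None =>
      exists j : Z, IZR j < x < IZR j + 1 /\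
        ((m = (2 * j)%Z /\ y = Pinf x) \/ (m = (2 * j + 1)%Z /\ y = - Pinf x))
  end.

Definition pseudo (k : option nat) (q : pt) : Prop :=
  match k with
  | Some n => exists l : nat, (1 <= l <= n - 1)%nat /\ q = (pfin n l, 0)
  | None => exists l : Z, q = (IZR l, 0)
  end.

Definition Omega (k : option nat) (g : R -> pt) : Prop :=
  global_trajectory (Zk k) g /\ Lambda k (g 0).

(* "s(g)_j = m", as a relation *)
Definition itin (k : option nat) (g : R -> pt) (j : Z) (m : Z) : Prop :=
  arc k m (g (IZR j)) \/ (pseudo k (g (IZR j)) /\ arc k m (g (IZR j + / 2))).

Definition sim (k : option nat) (g1 g2 : R -> pt) : Prop :=
  forall j m, itin k g1 j m <-> itin k g2 j m.

Definition T1 (g : R -> pt) : R -> pt := fun t => g (t + 1).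

Definition euclid (a b : pt) : R :=
  sqrt ((fst a - fst b) ^ 2 + (snd a - snd b) ^ 2).

Definition dist_to_set (a : pt) (B : pt -> Prop) : R :=
  real (Glb_Rbar (fun r => exists b, B b /\ r = euclid a b)).

Definition hausdorff (A B : pt -> Prop) : R :=
  Rmax (real (Lub_Rbar (fun r => exists a, A a /\ r = dist_to_set a B)))
       (real (Lub_Rbar (fun r => exists b, B b /\ r = dist_to_set b A))).

Definition image_on (g : R -> pt) (a b : R) : pt -> Prop :=
  fun q => exists t, a <= t <= b /\ q = g t.

Definition rep (k : option nat) (g : R -> pt) : R -> pt :=
  epsilon (inhabits g) (fun h => Omega k h /\ sim k g h /\ pseudo k (h 0)).

Definition rho_term (k : option nat) (g1 g2 : R -> pt) (i : Z) : R :=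
  (/ 2) ^ Z.abs_nat i *
  hausdorff (image_on (rep k g1) (IZR i) (IZR i + 1))
            (image_on (rep k g2) (IZR i) (IZR i + 1)).

(* sum over i in Z *)
Definition rho (k : option nat) (g1 g2 : R -> pt) : R :=
  rho_term k g1 g2 0 +
  Series (fun n => rho_term k g1 g2 (Z.of_nat (S n)) + rho_term k g1 g2 (- Z.of_nat (S n))).

From Stdlib Require Import Reals ZArith Lra Lia Classical.
From Stdlib Require Import ClassicalEpsilon FunctionalExtensionality PropExtensionality.
From Coquelicot Require Import Coquelicot.
Open Scope R_scope.

(* Both fields of Z_k have second component P_k'(x), so there is no sliding and a trajectory
   through Lambda_k moves along Lambda_k with horizontal speed 1 in one direction, y = +-P_k(x);
   the direction can only change where P_k vanishes.  Every trajectory reaches a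
   pseudo-equilibrium (p_l, 0), and from there it stays for exactly one unit of time in a
   single arc I_m (turning back at the fold (r_0, 0) or (r_1, 0) when k is finite), which the
   itinerary records.  Hence each class contains exactly one trajectory that sits at
   pseudo-equilibria at all integer times, the choice of this representative commutes with
   T_1, and T_1 acts on classes as the shift of itineraries, a bijection.  For the metric,
   T_1 shifts the Hausdorff distances of the unit windows by one index, which changes the
   weights 2^-|i| by a factor at most 2; since these distances grow at most linearly in |i|,
   all series converge, and rho_k(T_1 g, T_1 h) <= 2 rho_k(g, h) and
   rho_k(g, h) <= 2 rho_k(T_1 g, T_1 h). *)

Lemma Z_two_sided_ind (P : Z -> Prop) (n : Z) :
  P n -> (forall m, P m -> P (Z.succ m)) -> (forall m, P (Z.succ m) -> P m) -> forall m, P m.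
Proof.
  intros H0 Hup Hdown. apply (Z.order_induction P) with n; auto.
  intros ? ? ->; reflexivity.
Qed.

(** * Bi-infinite partitions of the line *)

Section Partition.

Variable tt : Z -> R.
Hypothesis tt_increasing : forall i, tt i < tt (Z.succ i).

Lemma partition_lt i j : (i < j)%Z -> tt i < tt j.
Proof.
  revert j. apply Z.lt_ind; [intros ? ? ->; reflexivity | apply tt_increasing |].
  intros m _ H. specialize (tt_increasing m). lra.
Qed.

Lemma partition_le i j : (i <= j)%Z -> tt i <= tt j.
Proof.
  intros H. destruct (Z.eq_dec i j) as [->|]; [lra|]. left; apply partition_lt; lia.
Qed.

Lemma partition_index_lt i j : tt i < tt j -> (i < j)%Z.
Proof.
  intros H. destruct (Z_lt_le_dec i j) as [|Hji]; auto.
  pose proof (partition_le _ _ Hji). lra.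
Qed.

Hypothesis tt_unbounded_above : forall M, exists i, M < tt i.
Hypothesis tt_unbounded_below : forall M, exists i, tt i < M.

Lemma partition_cover t : exists i, tt i <= t < tt (Z.succ i).
Proof.
  destruct (tt_unbounded_below t) as [i1 H1]. destruct (tt_unbounded_above t) as [i2 H2].
  assert (Hi : (i1 <= i2)%Z) by (apply Z.lt_le_incl, partition_index_lt; lra).
  revert i2 Hi H2.
  apply (Z.le_ind (fun j => t < tt j -> exists i, tt i <= t < tt (Z.succ i)));
    [intros ? ? ->; reflexivity | intros; exfalso; lra |].
  intros m _ IH Hm. destruct (Rlt_le_dec t (tt m)) as [Hlt|Hge]; [auto | exists m; lra].
Qed.

End Partition.

Lemma not_INR_between_succ l m : INR l < INR m < INR l + 1 -> False.
Proof.
  intros [H1 H2]. apply INR_lt in H1. rewrite <- S_INR in H2. apply INR_lt in H2. lia.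
Qed.

Lemma not_IZR_between_succ l m : IZR l < IZR m < IZR l + 1 -> False.
Proof.
  intros [H1 H2]. apply lt_IZR in H1. rewrite <- plus_IZR in H2. apply lt_IZR in H2. lia.
Qed.

Lemma INR_close_eq a b : INR a - INR b < 1 -> INR b - INR a < 1 -> a = b.
Proof.
  intros H1 H2. destruct (Nat.lt_total a b) as [H|[H|H]]; auto;
  apply le_INR in H; rewrite S_INR in H; lra.
Qed.

Lemma IZR_close_eq a b : IZR a - IZR b < 1 -> IZR b - IZR a < 1 -> a = b.
Proof.
  intros H1 H2. rewrite <- minus_IZR in H1, H2. apply lt_IZR in H1. apply lt_IZR in H2. lia.
Qed.

Lemma INR_ge2 n : (2 <= n)%nat -> 2 <= INR n.
Proof. intros H. apply le_INR in H. exact H. Qed.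

Lemma INR_pred n : (1 <= n)%nat -> INR (n - 1) = INR n - 1.
Proof. intros; rewrite minus_INR; simpl; auto; lra. Qed.

(** * The functions P_k *)

Lemma ex_derive_prodR_sq m (c : nat -> R) x :
  ex_derive (fun x => prodR m (fun i => (x - c i) ^ 2)) x.
Proof.
  induction m; simpl; [apply ex_derive_const|].
  apply (ex_derive_mult (fun x => prodR m (fun i => (x - c i) ^ 2))
                        (fun x => (x - c (S m)) * ((x - c (S m)) * 1))); auto.
  auto_derive; auto.
Qed.

Lemma ex_derive_Pfin n x : ex_derive (Pfin n) x.
Proof.
  apply (ex_derive_mult (fun x => - ((x + (INR n - 1) / 2) * (x - (INR n - 1) / 2)))
                        (fun x => prodR (n - 1) (fun i => (x - pfin n i) ^ 2))).
  - auto_derive; auto.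
  - apply ex_derive_prodR_sq.
Qed.

Lemma is_derive_Pk k x : is_derive (Pk k) x (fk k x).
Proof.
  destruct k as [n|]; simpl.
  - apply Derive_correct, ex_derive_Pfin.
  - change (is_derive (fun x => (1 - cos (2 * PI * x)) / PI) x (2 * sin (2 * PI * x))).
    pose proof PI_RGT_0. auto_derive; auto; field; lra.
Qed.

Lemma continuous_Pk k x : continuous (Pk k) x.
Proof. apply (ex_derive_continuous (Pk k)). eexists. apply is_derive_Pk. Qed.

Lemma prodR_ge0 m g : (forall i, 0 <= g i) -> 0 <= prodR m g.
Proof. intros H; induction m; simpl; [lra|]. apply Rmult_le_pos; auto. Qed.

Lemma prodR_gt0 m g : (forall i, (1 <= i <= m)%nat -> 0 < g i) -> 0 < prodR m g.
Proof.
  intros H; induction m; simpl; [lra|].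
  apply Rmult_lt_0_compat; [apply IHm; intros; apply H; lia | apply H; lia].
Qed.

Lemma prodR_eq0 m g : prodR m g = 0 -> exists i, (1 <= i <= m)%nat /\ g i = 0.
Proof.
  induction m; simpl; intros H; [lra|].
  destruct (Rmult_integral _ _ H) as [H1|H1].
  - destruct (IHm H1) as [i [Hi Hg]]. exists i; split; auto; lia.
  - exists (S m); split; auto; lia.
Qed.

Lemma prodR_eq0_at m g i : (1 <= i <= m)%nat -> g i = 0 -> prodR m g = 0.
Proof.
  induction m; simpl; intros Hi Hg; [lia|].
  destruct (Nat.eq_dec i (S m)) as [->|Hne]; [rewrite Hg; ring|].
  rewrite IHm; [ring|lia|auto].
Qed.

Lemma pfin_S n l : pfin n (S l) = pfin n l + 1.
Proof. unfold pfin; rewrite S_INR; ring. Qed.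

Lemma pfin_pred n l : (1 <= l)%nat -> pfin n (l - 1) = pfin n l - 1.
Proof. intros H; unfold pfin; rewrite INR_pred by auto; ring. Qed.

Lemma pfin_1 n : pfin n 1 = r0 n + /2.
Proof. unfold pfin, r0; simpl; field. Qed.

Lemma pfin_last n : (1 <= n)%nat -> pfin n (n - 1) = r1 n - /2.
Proof. intros H; unfold pfin, r1; rewrite INR_pred by auto; field. Qed.

Lemma pfin_le n a b : (a <= b)%nat -> pfin n a <= pfin n b.
Proof. unfold pfin; intros H; apply le_INR in H; lra. Qed.

Lemma pfin_bounds n l : (1 <= l <= n - 1)%nat -> r0 n + /2 <= pfin n l <= r1 n - /2.
Proof.
  intros H. unfold pfin, r0, r1.
  assert (1 <= INR l) by (apply (le_INR 1); lia).
  assert (INR l <= INR n - 1) by (rewrite <- INR_pred by lia; apply le_INR; lia).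
  lra.
Qed.

Lemma r0_add1_le_r1 n : (2 <= n)%nat -> r0 n + 1 <= r1 n.
Proof. intros H; apply INR_ge2 in H; unfold r0, r1; lra. Qed.

Lemma Pfin_factor n x :
  Pfin n x = - ((x - r0 n) * (x - r1 n)) * prodR (n - 1) (fun i => (x - pfin n i) ^ 2).
Proof. unfold Pfin, r0, r1. do 3 f_equal. lra. Qed.

Lemma Pfin_ge0 n x : r0 n <= x <= r1 n -> 0 <= Pfin n x.
Proof.
  intros H. rewrite Pfin_factor. apply Rmult_le_pos.
  - assert (0 <= x - r0 n) by lra. assert (x - r1 n <= 0) by lra. nra.
  - apply prodR_ge0; intros; apply pow2_ge_0.
Qed.

Lemma Pfin_lt0 n x : (2 <= n)%nat -> x < r0 n \/ r1 n < x -> Pfin n x < 0.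
Proof.
  intros Hn H. rewrite Pfin_factor. pose proof (r0_add1_le_r1 n Hn).
  assert (0 < prodR (n - 1) (fun i => (x - pfin n i) ^ 2)).
  { apply prodR_gt0. intros i Hi. pose proof (pfin_bounds n i Hi).
    assert (x - pfin n i <> 0) by lra.
    simpl; rewrite Rmult_1_r. apply (Rsqr_pos_lt (x - pfin n i)); auto. }
  assert (0 < (x - r0 n) * (x - r1 n)) by (destruct H; nra).
  nra.
Qed.

Lemma Pfin_eq0 n x : r0 n <= x <= r1 n -> Pfin n x = 0 ->
  x = r0 n \/ x = r1 n \/ exists l, (1 <= l <= n - 1)%nat /\ x = pfin n l.
Proof.
  intros Hx H. rewrite Pfin_factor in H.
  destruct (Rmult_integral _ _ H) as [H1|H1].
  - assert (H2 : (x - r0 n) * (x - r1 n) = 0) by lra.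
    destruct (Rmult_integral _ _ H2); [left | right; left]; lra.
  - right; right. destruct (prodR_eq0 _ _ H1) as [i [Hi Hg]].
    exists i; split; auto. simpl in Hg. nra.
Qed.

Lemma Pfin_pfin n l : (1 <= l <= n - 1)%nat -> Pfin n (pfin n l) = 0.
Proof.
  intros H. rewrite Pfin_factor, (prodR_eq0_at _ _ l); [ring | auto | simpl; ring].
Qed.

Lemma Pfin_r0 n : Pfin n (r0 n) = 0.
Proof. rewrite Pfin_factor. ring. Qed.

Lemma Pfin_r1 n : Pfin n (r1 n) = 0.
Proof. rewrite Pfin_factor. ring. Qed.

Lemma Pfin_neq0 n x : (2 <= n)%nat -> x <> r0 n -> x <> r1 n ->
  (forall l, (1 <= l <= n - 1)%nat -> x <> pfin n l) -> Pfin n x <> 0.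
Proof.
  intros Hn H0 H1 H2 H.
  destruct (Rle_dec (r0 n) x); destruct (Rle_dec x (r1 n));
    try (pose proof (Pfin_lt0 n x Hn); lra).
  destruct (Pfin_eq0 n x) as [?|[?|[l [Hl ->]]]]; auto. apply (H2 l); auto.
Qed.

Lemma Pfin_neq0_between n l x : (2 <= n)%nat -> (1 <= l)%nat -> (S l <= n - 1)%nat ->
  pfin n l < x < pfin n l + 1 -> Pfin n x <> 0.
Proof.
  intros Hn H1 H2 Hx. pose proof (pfin_bounds n l ltac:(lia)).
  pose proof (pfin_bounds n (S l) ltac:(lia)). rewrite pfin_S in *.
  apply Pfin_neq0; auto; try lra.
  intros m Hm ->. unfold pfin in Hx. apply (not_INR_between_succ l m); lra.
Qed.

Lemma Pfin_neq0_left n x : (2 <= n)%nat -> r0 n < x < pfin n 1 -> Pfin n x <> 0.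
Proof.
  intros Hn Hx. pose proof (pfin_bounds n 1 ltac:(lia)).
  apply Pfin_neq0; auto; try lra.
  intros m Hm ->. pose proof (pfin_le n 1 m ltac:(lia)). lra.
Qed.

Lemma Pfin_neq0_right n x : (2 <= n)%nat -> pfin n (n - 1) < x < r1 n -> Pfin n x <> 0.
Proof.
  intros Hn Hx. pose proof (pfin_bounds n (n - 1) ltac:(lia)).
  apply Pfin_neq0; auto; try lra.
  intros m Hm ->. pose proof (pfin_le n m (n - 1) ltac:(lia)). lra.
Qed.

Lemma Pinf_ge0 x : 0 <= Pinf x.
Proof.
  unfold Pinf. pose proof (COS_bound (2 * PI * x)). pose proof PI_RGT_0.
  apply Rmult_le_pos; [lra | left; apply Rinv_0_lt_compat; lra].
Qed.

Lemma Pinf_le x : Pinf x <= 2 / PI.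
Proof.
  unfold Pinf. pose proof (COS_bound (2 * PI * x)). pose proof PI_RGT_0.
  apply Rmult_le_compat_r; [left; apply Rinv_0_lt_compat|]; lra.
Qed.

Lemma Pinf_eq0 x : Pinf x = 0 -> exists l, x = IZR l.
Proof.
  unfold Pinf; intros H. pose proof PI_RGT_0.
  assert (Hc : cos (2 * (PI * x)) = 1).
  { replace (2 * (PI * x)) with (2 * PI * x) by ring.
    apply (Rmult_eq_compat_r PI) in H. unfold Rdiv in H.
    rewrite Rmult_assoc, Rinv_l, Rmult_0_l in H; lra. }
  rewrite cos_2a_sin in Hc. assert (Hs : sin (PI * x) = 0) by nra.
  destruct (sin_eq_0_0 _ Hs) as [l Hl]. exists l.
  apply (Rmult_eq_reg_l PI); [rewrite Hl; ring | lra].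
Qed.

Lemma Pinf_IZR l : Pinf (IZR l) = 0.
Proof.
  unfold Pinf. replace (2 * PI * IZR l) with (2 * (IZR l * PI)) by ring.
  rewrite cos_2a_sin, sin_eq_0_1 by (exists l; auto). unfold Rdiv; ring.
Qed.

Lemma Lambda_iff k (hk : valid_k k) q : Lambda k q <-> on_graph k q /\ 0 <= Pk k (fst q).
Proof.
  destruct k as [n|]; simpl in *.
  - split; intros [H1 H2]; split; auto; [apply Pfin_ge0; auto|].
    destruct (Rle_dec (r0 n) (fst q)); destruct (Rle_dec (fst q) (r1 n)); try (split; auto; fail);
      pose proof (Pfin_lt0 n (fst q) hk); lra.
  - split; [intros H; split; auto; apply Pinf_ge0 | tauto].
Qed.

Lemma Lambda_Pk_eq0 k q : Lambda k q -> Pk k (fst q) = 0 -> snd q = 0.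
Proof.
  intros HL HP. assert (Hg : on_graph k q) by (destruct k; simpl in HL; tauto).
  destruct Hg; lra.
Qed.

Lemma Lambda_flip k q : Lambda k q -> Lambda k (fst q, - snd q).
Proof. destruct k; simpl; unfold on_graph; simpl; intros H; [destruct H; split; auto|]; lra. Qed.

Lemma Lambda_snd_bounded k : exists B, forall q, Lambda k q -> Rabs (snd q) <= B.
Proof.
  destruct k as [n|].
  - destruct (Rle_dec (r0 n) (r1 n)) as [Hr|Hr].
    + destruct (continuity_ab_maj (fun x => Rabs (Pfin n x)) (r0 n) (r1 n) Hr) as [M [HM _]].
      { intros c _. apply continuity_pt_filterlim, continuous_Rabs_comp, (continuous_Pk (Some n)). }
      exists (Rabs (Pfin n M)). intros q [Hx [E|E]]; simpl in E; rewrite E;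
        [|rewrite Rabs_Ropp]; apply HM; auto.
    + exists 0. intros q [Hx _]. lra.
  - exists (2 / PI). intros q [E|E]; simpl in E; rewrite E; [|rewrite Rabs_Ropp];
      rewrite Rabs_right by (apply Rle_ge, Pinf_ge0); apply Pinf_le.
Qed.

(** * Motion along Lambda_k *)

Lemma is_derive_value (f : R -> R) x l l' : is_derive f x l -> l = l' -> is_derive f x l'.
Proof. intros H ->; exact H. Qed.

Lemma constant_of_derive0 (f : R -> R) a b :
  (forall t, a < t < b -> is_derive f t 0) -> (forall t, continuous f t) ->
  forall t, a <= t <= b -> f t = f a.
Proof.
  intros Hd Hc t Ht.
  destruct (Req_dec t a) as [->|Hne]; auto.
  destruct (MVT_gen f a t (fun _ => 0)) as [c [_ Hc2]].
  - intros x Hx. rewrite Rmin_left in Hx by lra. rewrite Rmax_right in Hx by lra. apply Hd; lra.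
  - intros x _. apply continuity_pt_filterlim, Hc.
  - lra.
Qed.

Lemma integral_curve_unit_speed k (g : R -> pt) a b s : s * s = 1 ->
  (forall t, continuous (fun u => fst (g u)) t /\ continuous (fun u => snd (g u)) t) ->
  integral_curve (fun q => (s, fk k (fst q))) g a b -> forall t, a <= t <= b ->
  fst (g t) = fst (g a) + s * (t - a) /\
  snd (g t) - s * Pk k (fst (g t)) = snd (g a) - s * Pk k (fst (g a)).
Proof.
  intros Hs Hc Hi t Ht.
  assert (Hlin : forall u, is_derive (fun v => s * v) u s) by (intros; auto_derive; auto; ring).
  assert (Hx : forall u, a <= u <= b -> fst (g u) - s * u = fst (g a) - s * a).
  { apply (constant_of_derive0 (fun u => fst (g u) - s * u)).
    - intros u Hu. destruct (Hi u Hu) as [H1 _]. simpl in H1.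
      eapply is_derive_value; [apply (is_derive_minus _ _ u _ _ H1 (Hlin u))|].
      unfold minus, plus, opp; simpl; ring.
    - intros u. apply (continuous_minus (fun v => fst (g v)) (fun v => s * v)); [apply Hc|].
      apply (ex_derive_continuous (fun v => s * v)). eexists; apply Hlin. }
  assert (Hy : forall u, a <= u <= b ->
            snd (g u) - s * Pk k (fst (g u)) = snd (g a) - s * Pk k (fst (g a))).
  { apply (constant_of_derive0 (fun u => snd (g u) - s * Pk k (fst (g u)))).
    - intros u Hu. destruct (Hi u Hu) as [H1 H2].
      assert (HP : is_derive (fun v => Pk k (fst (g v))) u (scal s (fk k (fst (g u)))))
        by (apply (is_derive_comp (Pk k) (fun v => fst (g v))); [apply is_derive_Pk | exact H1]).
      eapply is_derive_value.
      + apply (is_derive_minus (fun v => snd (g v)) (fun v => s * Pk k (fst (g v))));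
          [exact H2 | apply (is_derive_scal (fun v => Pk k (fst (g v)))), HP].
      + unfold minus, plus, opp, scal; simpl; unfold mult; simpl.
        change (fk k (fst (g u)) + - (s * (s * fk k (fst (g u)))) = 0).
        rewrite <- Rmult_assoc, Hs; ring.
    - intros u. apply (continuous_minus (fun v => snd (g v)) (fun v => s * Pk k (fst (g v))));
        [apply Hc|].
      apply (continuous_scal_r s (fun v => Pk k (fst (g v)))).
      apply (continuous_comp (fun v => fst (g v)) (Pk k)); [apply Hc | apply continuous_Pk]. }
  split; [specialize (Hx t Ht) | apply (Hy t Ht)]; lra.
Qed.

Definition piece_motion k (g : R -> pt) (a b : R) : Prop :=
  exists s, (s = 1 \/ s = -1) /\ forall t, a <= t <= b ->
    fst (g t) = fst (g a) + s * (t - a) /\ snd (g t) = s * Pk k (fst (g t)).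

Lemma local_piece_Zk k (hk : valid_k k) (g : R -> pt) a b :
  (forall t, continuous (fun u => fst (g u)) t /\ continuous (fun u => snd (g u)) t) ->
  a < b -> local_piece (Zk k) g a b -> (exists t0, a <= t0 <= b /\ Lambda k (g t0)) ->
  piece_motion k g a b /\ forall t, a <= t <= b -> Lambda k (g t).
Proof.
  intros Hc Hab Hp [t0 [Ht0 HL0]].
  assert (Hside : forall s, (s = 1 \/ s = -1) ->
            integral_curve (fun q => (s, fk k (fst q))) g a b ->
            (forall t, a <= t <= b -> 0 <= s * snd (g t)) ->
            piece_motion k g a b /\ forall t, a <= t <= b -> Lambda k (g t)).
  { intros s Hs Hi Hy.
    assert (Hss : s * s = 1) by (destruct Hs; subst; ring).
    pose proof (integral_curve_unit_speed k g a b s Hss Hc Hi) as Hm.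
    assert (HC : snd (g a) - s * Pk k (fst (g a)) = 0).
    { destruct (Hm t0 Ht0) as [_ E]. specialize (Hy t0 Ht0).
      apply (Lambda_iff k hk) in HL0. destruct HL0 as [[G|G] HP]; destruct Hs; subst s; lra. }
    assert (Hgraph : forall t, a <= t <= b -> snd (g t) = s * Pk k (fst (g t)))
      by (intros t Ht; destruct (Hm t Ht); lra).
    split.
    - exists s. split; auto. intros t Ht. split; [apply (Hm t Ht) | apply Hgraph; auto].
    - intros t Ht. apply (Lambda_iff k hk). specialize (Hgraph t Ht). specialize (Hy t Ht).
      unfold on_graph. destruct Hs; subst s; split; lra. }
  destruct Hp as [[Hi Hy]|[[Hi Hy]|[_ Hsl]]].
  - apply (Hside 1); [left; auto | exact Hi | intros t Ht; specialize (Hy t Ht); lra].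
  - apply (Hside (-1)); [right; auto | exact Hi | intros t Ht; specialize (Hy t Ht); lra].
  - exfalso. destruct (Hsl a ltac:(lra)) as [_ H]. simpl in H. nra.
Qed.

Definition Lambda_motion k (g : R -> pt) : Prop :=
  (forall t, Lambda k (g t)) /\
  exists tt : Z -> R,
    (forall i, tt i < tt (Z.succ i)) /\ (forall M, exists i, M < tt i) /\
    (forall M, exists i, tt i < M) /\ (forall i, piece_motion k g (tt i) (tt (Z.succ i))).

Lemma Omega_Lambda_motion k (hk : valid_k k) (g : R -> pt) : Omega k g -> Lambda_motion k g.
Proof.
  intros [[Hc [tt [Hinc [Hu [Hd [Hp _]]]]]] H0].
  assert (Hpiece : forall i, (exists t0, tt i <= t0 <= tt (Z.succ i) /\ Lambda k (g t0)) ->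
            piece_motion k g (tt i) (tt (Z.succ i)) /\
            forall t, tt i <= t <= tt (Z.succ i) -> Lambda k (g t))
    by (intros i; apply (local_piece_Zk k hk g); auto).
  set (LP := fun i => forall t, tt i <= t <= tt (Z.succ i) -> Lambda k (g t)).
  assert (HLP : forall i, LP i).
  { destruct (partition_cover tt Hinc Hu Hd 0) as [i0 Hi0].
    assert (Hpiece' : forall i, (exists t0, tt i <= t0 <= tt (Z.succ i) /\ Lambda k (g t0)) -> LP i)
      by (intros i H; exact (proj2 (Hpiece i H))).
    apply (Z_two_sided_ind LP i0); intros; apply Hpiece'.
    - exists 0; split; [lra | auto].
    - exists (tt (Z.succ m)). pose proof (Hinc m). pose proof (Hinc (Z.succ m)).
      split; [lra | apply H; lra].
    - exists (tt (Z.succ m)). pose proof (Hinc m). pose proof (Hinc (Z.succ m)).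
      split; [lra | apply H; lra]. }
  split.
  - intros t. destruct (partition_cover tt Hinc Hu Hd t) as [i Hi]. apply (HLP i); lra.
  - exists tt. repeat split; auto. intros i. apply Hpiece.
    exists (tt i). pose proof (Hinc i). split; [lra | apply (HLP i); lra].
Qed.

Lemma Lambda_motion_fst_lipschitz k (g : R -> pt) : Lambda_motion k g ->
  forall t u, Rabs (fst (g t) - fst (g u)) <= Rabs (t - u).
Proof.
  intros [_ [tt [Hinc [Hu [Hd Hp]]]]].
  assert (Hin : forall i t u, tt i <= u <= t -> t <= tt (Z.succ i) ->
            Rabs (fst (g t) - fst (g u)) <= t - u).
  { intros i t u Hut Ht. destruct (Hp i) as [s [Hs Hf]].
    destruct (Hf t ltac:(lra)) as [Et _]. destruct (Hf u ltac:(lra)) as [Eu _].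
    rewrite Et, Eu. replace (_ - _) with (s * (t - u)) by ring.
    rewrite Rabs_mult, (Rabs_right (t - u)) by lra.
    destruct Hs as [-> | ->]; rewrite ?Rabs_R1, ?Rabs_m1; lra. }
  assert (Hle : forall t u, u <= t -> Rabs (fst (g t) - fst (g u)) <= t - u).
  { intros t u Hut. destruct (partition_cover tt Hinc Hu Hd u) as [i Hi].
    destruct (partition_cover tt Hinc Hu Hd t) as [j Hj].
    assert (Hij : (i <= j)%Z) by (apply Zlt_succ_le, (partition_index_lt tt Hinc); lra).
    enough (Hup : forall j, (i <= j)%Z -> forall t, u <= t <= tt (Z.succ j) ->
                    Rabs (fst (g t) - fst (g u)) <= t - u) by (apply (Hup j); [exact Hij | lra]).
    apply (Z.le_ind (fun j => forall t, u <= t <= tt (Z.succ j) ->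
                                Rabs (fst (g t) - fst (g u)) <= t - u));
      [intros ? ? ->; reflexivity | intros t' ?; apply (Hin i); lra |].
    intros j' Hij' IH t' Ht'. set (t1 := tt (Z.succ j')).
    destruct (Rle_dec t' t1) as [Hle1|Hgt1]; [apply IH; unfold t1 in *; lra|].
    assert (Ht1 : u <= t1).
    { pose proof (partition_le tt Hinc (Z.succ i) (Z.succ j') ltac:(lia)). unfold t1; lra. }
    pose proof (IH t1 ltac:(unfold t1 in *; lra)).
    pose proof (Hin (Z.succ j') t' t1 ltac:(unfold t1 in *; lra) ltac:(lra)).
    pose proof (Rabs_triang (fst (g t') - fst (g t1)) (fst (g t1) - fst (g u))).
    replace (fst (g t') - fst (g t1) + (fst (g t1) - fst (g u))) with (fst (g t') - fst (g u))
      in * by ring.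
    lra. }
  intros t u. destruct (Rle_dec u t).
  - rewrite (Rabs_right (t - u)) by lra. apply Hle; lra.
  - rewrite Rabs_minus_sym, (Rabs_left (t - u)), Ropp_minus_distr by lra. apply Hle; lra.
Qed.

Definition ride k (x0 sig s : R) : pt := (x0 + sig * s, sig * Pk k (x0 + sig * s)).

Lemma ride_eq k x0 sig s x0' sig' s' :
  x0 + sig * s = x0' + sig' * s' -> sig = sig' -> ride k x0 sig s = ride k x0' sig' s'.
Proof. unfold ride; intros -> ->; reflexivity. Qed.

Lemma piece_motion_ride k (g : R -> pt) a b : piece_motion k g a b ->
  exists sig, (sig = 1 \/ sig = -1) /\
  forall t u, a <= t <= b -> a <= u <= b -> g t = ride k (fst (g u)) sig (t - u).
Proof.
  intros [sig [Hs Hf]]. exists sig. split; auto. intros t u Ht Hu.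
  destruct (Hf t Ht) as [Et1 Et2]. destruct (Hf u Hu) as [Eu _].
  rewrite (surjective_pairing (g t)). unfold ride.
  replace (fst (g u) + sig * (t - u)) with (fst (g t)) by (rewrite Et1, Eu; ring).
  rewrite Et2. reflexivity.
Qed.

(* At a junction of two pieces, y = +-P_k(x) with P_k(x) <> 0 forces the same sign on both
   pieces, hence the same direction. *)
Lemma motion_until_zero k g : Lambda_motion k g -> forall c, exists sig, (sig = 1 \/ sig = -1) /\
  forall d, (forall s, 0 < s < d -> Pk k (fst (g c) + sig * s) <> 0) ->
  forall s, 0 <= s <= d -> g (c + s) = ride k (fst (g c)) sig s.
Proof.
  intros [_ [tt [Hinc [Hu [Hd Hp]]]]] c.
  destruct (partition_cover tt Hinc Hu Hd c) as [i0 Hi0].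
  destruct (piece_motion_ride k g _ _ (Hp i0)) as [sig [Hsig Hf0]].
  exists sig. split; [exact Hsig|]. intros d Hnz.
  set (F := fun t => g t = ride k (fst (g c)) sig (t - c)).
  assert (Hstep : forall j, (i0 <= j)%Z -> forall t, c <= t <= c + d -> t <= tt (Z.succ j) -> F t).
  { apply (Z.le_ind (fun j => forall t, c <= t <= c + d -> t <= tt (Z.succ j) -> F t));
      [intros ? ? ->; reflexivity | intros t Ht Ht'; apply Hf0; lra |].
    intros j Hj IH t Ht Ht'. set (t1 := tt (Z.succ j)).
    destruct (Rle_dec t t1) as [Hle|Hgt]; [apply IH; auto|].
    assert (Hct1 : c < t1).
    { pose proof (partition_le tt Hinc (Z.succ i0) (Z.succ j) ltac:(lia)). unfold t1; lra. }
    assert (F1 : F t1) by (apply IH; unfold t1 in *; lra).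
    destruct (piece_motion_ride k g _ _ (Hp (Z.succ j))) as [s1 [Hs1 Hf1]].
    pose proof (Hinc (Z.succ j)) as Ht1.
    assert (E1 := Hf1 t1 t1 ltac:(unfold t1; lra) ltac:(unfold t1; lra)).
    rewrite F1 in E1. unfold ride in E1. simpl in E1. injection E1 as _ E1.
    rewrite Rminus_diag, Rmult_0_r, Rplus_0_r in E1.
    assert (Hs : s1 = sig).
    { apply (Rmult_eq_reg_r (Pk k (fst (g c) + sig * (t1 - c)))); [lra | apply Hnz; lra]. }
    unfold F. rewrite (Hf1 t t1 ltac:(unfold t1 in *; lra) ltac:(unfold t1; lra)), F1, Hs.
    apply ride_eq; simpl; [ring | reflexivity]. }
  intros s Hs. destruct (Hu (c + s)) as [j Hj].
  assert (Hij : (i0 < j)%Z) by (apply (partition_index_lt tt Hinc); lra).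
  assert (Hc : F (c + s)) by (apply (Hstep (Z.pred j)); [lia | lra | rewrite Z.succ_pred; lra]).
  unfold F in Hc. rewrite Hc. f_equal. ring.
Qed.

Definition flip_time (g : R -> pt) : R -> pt := fun t => (fst (g (- t)), - snd (g (- t))).

Lemma Lambda_motion_flip_time k g : Lambda_motion k g -> Lambda_motion k (flip_time g).
Proof.
  intros [HL [tt [Hinc [Hu [Hd Hp]]]]].
  split; [intros t; apply Lambda_flip, HL|].
  exists (fun i => - tt (- i)%Z). split; [|split; [|split]].
  - intros i. pose proof (Hinc (Z.pred (- i))). rewrite Z.succ_pred in H.
    replace (- Z.succ i)%Z with (Z.pred (- i)) by lia. lra.
  - intros M. destruct (Hd (- M)) as [j Hj]. exists (- j)%Z. rewrite Z.opp_involutive. lra.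
  - intros M. destruct (Hu (- M)) as [j Hj]. exists (- j)%Z. rewrite Z.opp_involutive. lra.
  - intros i. set (p := Z.pred (- i)).
    assert (Hsp : Z.succ p = (- i)%Z) by (unfold p; lia).
    replace (- Z.succ i)%Z with p by (unfold p; lia).
    destruct (Hp p) as [s [Hs Hf]]. pose proof (Hinc p) as Hpp. rewrite Hsp in Hf, Hpp.
    exists (- s). split; [destruct Hs; [right | left]; lra|].
    intros t Ht. unfold flip_time; simpl. rewrite Ropp_involutive.
    destruct (Hf (- t) ltac:(lra)) as [H1 H2]. destruct (Hf (tt (- i)%Z) ltac:(lra)) as [H3 _].
    split; [rewrite H1, H3; ring | rewrite H2; ring].
Qed.

Lemma turn_at_r1 n (hn : (2 <= n)%nat) g : Lambda_motion (Some n) g ->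
  forall c, fst (g c) = r1 n -> forall s, 0 <= s <= /2 -> g (c + s) = ride (Some n) (r1 n) (-1) s.
Proof.
  intros HT c Hx. pose proof (pfin_last n ltac:(lia)) as Hlast.
  destruct (motion_until_zero _ _ HT c) as [sig [[-> | ->] H]]; rewrite Hx in H.
  - exfalso.
    assert (E : g (c + /4) = ride (Some n) (r1 n) 1 (/4)).
    { apply (H (/4)); [|lra]. intros s Hs. apply Rlt_not_eq, Pfin_lt0; auto; lra. }
    destruct (proj1 HT (c + /4)) as [Hr _]. rewrite E in Hr. simpl in Hr. lra.
  - apply H. intros s Hs. apply Pfin_neq0_right; auto; lra.
Qed.

Lemma turn_at_r0 n (hn : (2 <= n)%nat) g : Lambda_motion (Some n) g ->
  forall c, fst (g c) = r0 n -> forall s, 0 <= s <= /2 -> g (c + s) = ride (Some n) (r0 n) 1 s.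
Proof.
  intros HT c Hx. pose proof (pfin_1 n) as Hfirst.
  destruct (motion_until_zero _ _ HT c) as [sig [[-> | ->] H]]; rewrite Hx in H.
  - apply H. intros s Hs. apply Pfin_neq0_left; auto; lra.
  - exfalso.
    assert (E : g (c + /4) = ride (Some n) (r0 n) (-1) (/4)).
    { apply (H (/4)); [|lra]. intros s Hs. apply Rlt_not_eq, Pfin_lt0; auto; lra. }
    destruct (proj1 HT (c + /4)) as [Hr _]. rewrite E in Hr. simpl in Hr. lra.
Qed.

Lemma exists_first_zero (f : R -> R) D : (forall x, continuous f x) -> 0 <= D -> f D = 0 ->
  exists d, 0 <= d <= D /\ f d = 0 /\ forall s, 0 <= s < d -> f s <> 0.
Proof.
  intros Hc HD HfD.
  set (E := fun s => 0 <= s <= D /\ f s = 0).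
  destruct (Glb_Rbar_correct E) as [Hlb Hglb].
  assert (HgD : Rbar_le (Glb_Rbar E) D) by (apply Hlb; split; [lra | auto]).
  assert (Hg0 : Rbar_le 0 (Glb_Rbar E)) by (apply Hglb; intros x [Hx _]; simpl; lra).
  destruct (Glb_Rbar E) as [d| |]; simpl in HgD, Hg0; try contradiction.
  assert (Hbelow : forall s, 0 <= s < d -> f s <> 0).
  { intros s Hs Hfs. assert (Hds : Rbar_le d s) by (apply Hlb; split; [lra | auto]).
    simpl in Hds; lra. }
  exists d. split; [lra|]. split; [|exact Hbelow].
  destruct (Req_dec (f d) 0) as [|Hne]; auto. exfalso.
  destruct (continuous_neq_0 f d (proj2 (continuity_pt_filterlim f d) (Hc d)) Hne) as [eps Heps].
  destruct (classic (exists s, E s /\ s < d + eps)) as [[s [[Hs Hfs] Hlt]]|Hno].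
  - assert (Hds : Rbar_le d s) by (apply Hlb; split; auto). simpl in Hds.
    apply (Heps (s - d)); [rewrite Rabs_right; lra | replace (d + (s - d)) with s by ring; auto].
  - assert (Hlow : Rbar_le (d + eps) d).
    { apply Hglb. intros s Hs. simpl. apply Rnot_lt_le. intros Hlt. apply Hno. exists s; auto. }
    simpl in Hlow. pose proof (cond_pos eps). lra.
Qed.

Lemma Pk_zero_ahead k (hk : valid_k k) q sig : Lambda k q -> (sig = 1 \/ sig = -1) ->
  exists D, 0 <= D /\ Pk k (fst q + sig * D) = 0.
Proof.
  intros HL Hs. destruct k as [n|]; simpl.
  - destruct HL as [Hx _]. destruct Hs as [-> | ->].
    + exists (r1 n - fst q). split; [lra|].
      replace (fst q + 1 * (r1 n - fst q)) with (r1 n) by ring. apply Pfin_r1.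
    + exists (fst q - r0 n). split; [lra|].
      replace (fst q + -1 * (fst q - r0 n)) with (r0 n) by ring. apply Pfin_r0.
  - destruct Hs as [-> | ->].
    + exists (IZR (up (fst q)) - fst q). destruct (archimed (fst q)). split; [lra|].
      replace (fst q + 1 * (IZR (up (fst q)) - fst q)) with (IZR (up (fst q))) by ring.
      apply Pinf_IZR.
    + exists (fst q - IZR (Zfloor (fst q))). destruct (Zfloor_bound (fst q)). split; [lra|].
      replace (fst q + -1 * (fst q - IZR (Zfloor (fst q)))) with (IZR (Zfloor (fst q))) by ring.
      apply Pinf_IZR.
Qed.

Lemma exists_time_Pk_eq0 k (hk : valid_k k) g : Lambda_motion k g ->
  exists c, Pk k (fst (g c)) = 0.
Proof.
  intros HT. destruct (motion_until_zero k g HT 0) as [sig [Hsig H]].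
  destruct (Pk_zero_ahead k hk (g 0) sig (proj1 HT 0) Hsig) as [D [HD HPD]].
  destruct (exists_first_zero (fun s => Pk k (fst (g 0) + sig * s)) D) as [d [Hd [Hz Hnz]]]; auto.
  { intros x. apply (continuous_comp (fun s => fst (g 0) + sig * s) (Pk k));
      [apply (ex_derive_continuous (fun s => fst (g 0) + sig * s)); auto_derive; auto
      | apply continuous_Pk]. }
  exists (0 + d). rewrite (H d (fun s Hs => Hnz s ltac:(lra)) d ltac:(lra)). exact Hz.
Qed.

Lemma ride_pseudo_fin n l x0 sig s : (1 <= l <= n - 1)%nat -> x0 + sig * s = pfin n l ->
  pseudo (Some n) (ride (Some n) x0 sig s).
Proof.
  intros Hl E. exists l. split; auto. unfold ride, Pk. rewrite E, Pfin_pfin by auto. f_equal; ring.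
Qed.

Lemma ride_pseudo_inf l x0 sig s : x0 + sig * s = IZR l -> pseudo None (ride None x0 sig s).
Proof. intros E. exists l. unfold ride, Pk. rewrite E, Pinf_IZR. f_equal; ring. Qed.

Lemma exists_pseudo_time k (hk : valid_k k) g : Lambda_motion k g -> exists c, pseudo k (g c).
Proof.
  intros HT. destruct (exists_time_Pk_eq0 k hk g HT) as [c Hc].
  pose proof (Lambda_Pk_eq0 k _ (proj1 HT c) Hc) as Hy.
  destruct k as [n|]; simpl in hk.
  - destruct (proj1 HT c) as [Hx _].
    destruct (Pfin_eq0 n _ Hx Hc) as [E|[E|[l [Hl E]]]].
    + exists (c + /2). rewrite (turn_at_r0 n hk g HT c E) by lra.
      apply (ride_pseudo_fin n 1); [lia | rewrite pfin_1; ring].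
    + exists (c + /2). rewrite (turn_at_r1 n hk g HT c E) by lra.
      apply (ride_pseudo_fin n (n - 1)); [lia | rewrite pfin_last by lia; ring].
    + exists c, l. split; auto. rewrite (surjective_pairing (g c)), E, Hy. reflexivity.
  - destruct (Pinf_eq0 _ Hc) as [l E]. exists c, l.
    rewrite (surjective_pairing (g c)), E, Hy. reflexivity.
Qed.

(** * Unit segments between pseudo-equilibria *)

Definition dir (b : bool) : R := if b then 1 else -1.

Lemma dir_of_sign sig : sig = 1 \/ sig = -1 -> exists b, sig = dir b.
Proof. intros [-> | ->]; [exists true | exists false]; reflexivity. Qed.

Lemma on_graph_ride k x0 sig s : sig = 1 \/ sig = -1 -> on_graph k (ride k x0 sig s).
Proof. unfold on_graph, ride; simpl; intros [-> | ->]; [left | right]; ring. Qed.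

(* For finite k, the unit segment leaving p_l to the right (b = true) or to the left
   (b = false) meets the fold point (r_1, 0), resp. (r_0, 0), at time 1/2 when l = k - 1,
   resp. l = 1, and comes back along the other branch of Lambda_k. *)
Definition turns_back (n l : nat) (b : bool) : bool := if b then Nat.eqb l (n - 1) else Nat.eqb l 1.

Definition seg_fin (n l : nat) (b : bool) (s : R) : pt :=
  if turns_back n l b then
    if Rle_dec s (/2) then ride (Some n) (pfin n l) (dir b) s
    else ride (Some n) (pfin n l + dir b) (- dir b) s
  else ride (Some n) (pfin n l) (dir b) s.

Definition seg_arc_fin (n l : nat) (b : bool) : Z :=
  if b then (if Nat.eqb l (n - 1) then (2 * Z.of_nat n - 3)%Z else (2 * Z.of_nat l - 1)%Z)
  else (if Nat.eqb l 1 then 0%Z else (2 * Z.of_nat (l - 1))%Z).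

Lemma Lambda_motion_seg_fin n (hn : (2 <= n)%nat) g : Lambda_motion (Some n) g ->
  forall c l, (1 <= l <= n - 1)%nat -> g c = (pfin n l, 0) ->
  exists b, forall s, 0 <= s <= 1 -> g (c + s) = seg_fin n l b s.
Proof.
  intros HT c l Hl Hgc. pose proof (pfin_bounds n l Hl) as Hpl.
  pose proof (pfin_last n ltac:(lia)) as Hlast. pose proof (pfin_1 n) as Hfirst.
  destruct (motion_until_zero _ _ HT c) as [sig [Hsig H]]. rewrite Hgc in H; simpl in H.
  destruct (dir_of_sign sig Hsig) as [b ->]. exists b. unfold seg_fin, turns_back.
  destruct b; simpl dir in *.
  - destruct (Nat.eqb_spec l (n - 1)) as [->|Hne].
    + assert (Hhalf : forall s, 0 <= s <= /2 -> g (c + s) = ride (Some n) (pfin n (n - 1)) 1 s)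
        by (apply (H (/2)); intros s Hs; apply Pfin_neq0_right; auto; lra).
      assert (Hmid : fst (g (c + /2)) = r1 n) by (rewrite Hhalf by lra; simpl; lra).
      intros s Hs. destruct (Rle_dec s (/2)); [apply Hhalf; lra|].
      replace (c + s) with (c + /2 + (s - /2)) by ring.
      rewrite (turn_at_r1 n hn g HT _ Hmid) by lra. apply ride_eq; lra.
    + intros s Hs. apply (H 1); [|exact Hs]. intros u Hu.
      apply (Pfin_neq0_between n l); auto; lia || lra.
  - destruct (Nat.eqb_spec l 1) as [->|Hne].
    + assert (Hhalf : forall s, 0 <= s <= /2 -> g (c + s) = ride (Some n) (pfin n 1) (-1) s)
        by (apply (H (/2)); intros s Hs; apply Pfin_neq0_left; auto; lra).
      assert (Hmid : fst (g (c + /2)) = r0 n) by (rewrite Hhalf by lra; simpl; lra).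
      intros s Hs. destruct (Rle_dec s (/2)); [apply Hhalf; lra|].
      replace (c + s) with (c + /2 + (s - /2)) by ring.
      rewrite (turn_at_r0 n hn g HT _ Hmid) by lra. apply ride_eq; lra.
    + intros s Hs. apply (H 1); [|exact Hs]. intros u Hu.
      apply (Pfin_neq0_between n (l - 1)); try lia. rewrite pfin_pred by lia. lra.
Qed.

Lemma seg_fin_in_arc n l b s : (2 <= n)%nat -> (1 <= l <= n - 1)%nat -> 0 < s < 1 ->
  arc (Some n) (seg_arc_fin n l b) (seg_fin n l b s).
Proof.
  intros Hn Hl Hs. pose proof (pfin_bounds n l Hl).
  unfold seg_fin, seg_arc_fin, turns_back. destruct b; simpl dir.
  - destruct (Nat.eqb_spec l (n - 1)) as [->|Hne].
    + right; left. rewrite pfin_last in * by lia. split; [reflexivity|].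
      destruct (Rle_dec s (/2)); (split; [simpl; lra | apply on_graph_ride; lra]).
    + right; right. exists l. split; [lia|]. simpl. rewrite pfin_S.
      split; [lra | left; split; [reflexivity | ring]].
  - destruct (Nat.eqb_spec l 1) as [->|Hne].
    + left. rewrite pfin_1 in *. split; [reflexivity|].
      destruct (Rle_dec s (/2)); (split; [simpl; lra | apply on_graph_ride; lra]).
    + right; right. exists (l - 1)%nat. split; [lia|]. simpl.
      replace (S (l - 1)) with l by lia. rewrite pfin_pred by lia.
      split; [lra | right; split; [reflexivity | ring]].
Qed.

Lemma seg_fin_end_pseudo n l b : (2 <= n)%nat -> (1 <= l <= n - 1)%nat ->
  pseudo (Some n) (seg_fin n l b 1).
Proof.
  intros Hn Hl. unfold seg_fin, turns_back.
  destruct b; simpl dir.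
  - destruct (Nat.eqb_spec l (n - 1)) as [->|Hne].
    + destruct (Rle_dec 1 (/2)); [lra|]. apply (ride_pseudo_fin n (n - 1)); [lia | ring].
    + apply (ride_pseudo_fin n (S l)); [lia | rewrite pfin_S; ring].
  - destruct (Nat.eqb_spec l 1) as [->|Hne].
    + destruct (Rle_dec 1 (/2)); [lra|]. apply (ride_pseudo_fin n 1); [lia | ring].
    + apply (ride_pseudo_fin n (l - 1)); [lia | rewrite pfin_pred by lia; ring].
Qed.

Lemma seg_arc_fin_inj n l1 l2 b1 b2 :
  (2 <= n)%nat -> (1 <= l1 <= n - 1)%nat -> (1 <= l2 <= n - 1)%nat ->
  seg_arc_fin n l1 b1 = seg_arc_fin n l2 b2 -> l1 = l2 /\ b1 = b2.
Proof.
  intros Hn H1 H2. unfold seg_arc_fin.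
  destruct b1, b2; destruct (Nat.eqb_spec l1 (n - 1)); destruct (Nat.eqb_spec l2 (n - 1));
    destruct (Nat.eqb_spec l1 1); destruct (Nat.eqb_spec l2 1); intros H;
    try (split; [lia | reflexivity]); exfalso; lia.
Qed.

Definition seg_arc_inf (l : Z) (b : bool) : Z := if b then (2 * l)%Z else (2 * (l - 1) + 1)%Z.

Lemma Lambda_motion_seg_inf g : Lambda_motion None g -> forall c l, g c = (IZR l, 0) ->
  exists b, forall s, 0 <= s <= 1 -> g (c + s) = ride None (IZR l) (dir b) s.
Proof.
  intros HT c l Hgc. destruct (motion_until_zero _ _ HT c) as [sig [Hsig H]].
  rewrite Hgc in H; simpl in H. destruct (dir_of_sign sig Hsig) as [b ->]. exists b.
  apply (H 1). intros u Hu E. destruct (Pinf_eq0 _ E) as [l' El].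
  destruct b; simpl in El.
  - apply (not_IZR_between_succ l l'); lra.
  - apply (not_IZR_between_succ (l - 1) l'); rewrite minus_IZR; lra.
Qed.

Lemma ride_inf_in_arc l b s : 0 < s < 1 -> arc None (seg_arc_inf l b) (ride None (IZR l) (dir b) s).
Proof.
  intros Hs. unfold seg_arc_inf. destruct b; simpl.
  - exists l. split; [lra|]. left; split; [reflexivity | ring].
  - exists (l - 1)%Z. rewrite minus_IZR. split; [lra|]. right; split; [reflexivity | ring].
Qed.

Lemma ride_inf_end_pseudo l b : pseudo None (ride None (IZR l) (dir b) 1).
Proof.
  destruct b; simpl.
  - apply (ride_pseudo_inf (l + 1)). rewrite plus_IZR; ring.
  - apply (ride_pseudo_inf (l - 1)). rewrite minus_IZR; ring.
Qed.

Lemma seg_arc_inf_inj l1 l2 b1 b2 : seg_arc_inf l1 b1 = seg_arc_inf l2 b2 -> l1 = l2 /\ b1 = b2.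
Proof. unfold seg_arc_inf; destruct b1, b2; intros; split; try lia; auto; exfalso; lia. Qed.

(* A unit segment is indexed by its starting pseudo-equilibrium l, read through Z.to_nat
   (so 1 <= l <= k - 1) for finite k, and by its direction b. *)
Definition seg k (l : Z) (b : bool) (s : R) : pt :=
  match k with Some n => seg_fin n (Z.to_nat l) b s | None => ride None (IZR l) (dir b) s end.

Definition seg_arc k (l : Z) (b : bool) : Z :=
  match k with Some n => seg_arc_fin n (Z.to_nat l) b | None => seg_arc_inf l b end.

Definition seg_index_ok k (l : Z) : Prop :=
  match k with Some n => (1 <= Z.to_nat l <= n - 1)%nat | None => True end.

Lemma Lambda_motion_seg k (hk : valid_k k) g : Lambda_motion k g -> forall c, pseudo k (g c) ->
  exists l b, seg_index_ok k l /\ forall s, 0 <= s <= 1 -> g (c + s) = seg k l b s.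
Proof.
  intros HT c Hp. destruct k as [n|]; simpl in *.
  - destruct Hp as [l [Hl Hgc]]. destruct (Lambda_motion_seg_fin n hk g HT c l Hl Hgc) as [b Hb].
    exists (Z.of_nat l), b. rewrite Nat2Z.id. split; auto.
  - destruct Hp as [l Hgc]. destruct (Lambda_motion_seg_inf g HT c l Hgc) as [b Hb].
    exists l, b; split; auto.
Qed.

Lemma seg_in_arc k (hk : valid_k k) l b s : seg_index_ok k l -> 0 < s < 1 ->
  arc k (seg_arc k l b) (seg k l b s).
Proof. destruct k; simpl; intros; [apply seg_fin_in_arc | apply ride_inf_in_arc]; auto. Qed.

Lemma seg_end_pseudo k (hk : valid_k k) l b : seg_index_ok k l -> pseudo k (seg k l b 1).
Proof. destruct k; simpl; intros; [apply seg_fin_end_pseudo | apply ride_inf_end_pseudo]; auto. Qed.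

Lemma seg_arc_inj k (hk : valid_k k) l1 l2 b1 b2 : seg_index_ok k l1 -> seg_index_ok k l2 ->
  seg_arc k l1 b1 = seg_arc k l2 b2 -> l1 = l2 /\ b1 = b2.
Proof.
  destruct k; simpl; intros H1 H2 E.
  - destruct (seg_arc_fin_inj _ _ _ _ _ hk H1 H2 E) as [E1 E2]. split; auto. lia.
  - apply seg_arc_inf_inj; auto.
Qed.

Lemma pseudo_not_arc k (hk : valid_k k) q m : pseudo k q -> arc k m q -> False.
Proof.
  destruct k as [n|]; simpl in hk.
  - intros [l [Hl ->]]. simpl.
    intros [[_ [[_ H] _]]|[[_ [[H _] _]]|[j [Hj [[H1 H2] _]]]]].
    + pose proof (pfin_le n 1 l ltac:(lia)). lra.
    + pose proof (pfin_le n l (n - 1) ltac:(lia)). lra.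
    + rewrite pfin_S in H2. unfold pfin in H1, H2. apply (not_INR_between_succ j l); lra.
  - intros [l ->]. simpl. intros [j [[H1 H2] _]]. apply (not_IZR_between_succ j l); auto.
Qed.

Lemma arc_unique k (hk : valid_k k) q m m' : arc k m q -> arc k m' q -> m = m'.
Proof.
  destruct k as [n|]; simpl in hk; simpl.
  - assert (Hlast : pfin n 1 <= pfin n (n - 1)) by (apply pfin_le; lia).
    intros [[-> [[H1 H2] _]]|[[-> [[H1 H2] _]]|[j [Hj [[H1 H2] Hb]]]]]
           [[-> [[H1' H2'] _]]|[[-> [[H1' H2'] _]]|[j' [Hj' [[H1' H2'] Hb']]]]];
    try reflexivity; try lra;
    try (pose proof (pfin_le n 1 j ltac:(lia)); lra);
    try (pose proof (pfin_le n 1 j' ltac:(lia)); lra);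
    try (pose proof (pfin_le n (S j) (n - 1) ltac:(lia)); lra);
    try (pose proof (pfin_le n (S j') (n - 1) ltac:(lia)); lra).
    rewrite pfin_S in H2, H2'.
    assert (j = j') by (apply INR_close_eq; unfold pfin in *; lra). subst j'.
    assert (Hnz : Pfin n (fst q) <> 0) by (apply (Pfin_neq0_between n j); auto; lia || lra).
    destruct Hb as [[-> E]|[-> E]]; destruct Hb' as [[-> E']|[-> E']]; auto;
      exfalso; apply Hnz; lra.
  - intros [j [[H1 H2] Hb]] [j' [[H1' H2'] Hb']].
    assert (j = j') by (apply IZR_close_eq; lra). subst j'.
    assert (Hnz : Pinf (fst q) <> 0).
    { intros E. destruct (Pinf_eq0 _ E) as [l' El]. apply (not_IZR_between_succ j l'); lra. }
    destruct Hb as [[-> E]|[-> E]]; destruct Hb' as [[-> E']|[-> E']]; auto;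
      exfalso; apply Hnz; lra.
Qed.

(** * Representatives of the classes *)

Lemma pseudo_flip k q : pseudo k q -> pseudo k (fst q, - snd q).
Proof.
  destruct k; simpl.
  - intros [l [Hl ->]]. exists l; split; auto. simpl. f_equal; ring.
  - intros [l ->]. exists l. simpl. f_equal; ring.
Qed.

Lemma pseudo_next k (hk : valid_k k) g : Lambda_motion k g ->
  forall c, pseudo k (g c) -> pseudo k (g (c + 1)).
Proof.
  intros HT c Hp. destruct (Lambda_motion_seg k hk g HT c Hp) as [l [b [Hl Hs]]].
  rewrite Hs by lra. apply seg_end_pseudo; auto.
Qed.

Lemma pseudo_prev k (hk : valid_k k) g : Lambda_motion k g ->
  forall c, pseudo k (g c) -> pseudo k (g (c - 1)).
Proof.
  intros HT c Hp.
  assert (Hf : pseudo k (flip_time g (- c))).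
  { unfold flip_time. rewrite Ropp_involutive. apply pseudo_flip; auto. }
  apply (pseudo_next k hk _ (Lambda_motion_flip_time k g HT)), pseudo_flip in Hf.
  unfold flip_time in Hf; simpl in Hf. rewrite Ropp_involutive in Hf.
  replace (- (- c + 1)) with (c - 1) in Hf by ring. rewrite <- surjective_pairing in Hf. exact Hf.
Qed.

Lemma pseudo_at_integers k (hk : valid_k k) g : Lambda_motion k g ->
  forall c, pseudo k (g c) -> forall z, pseudo k (g (c + IZR z)).
Proof.
  intros HT c Hp. apply (Z_two_sided_ind (fun z => pseudo k (g (c + IZR z))) 0).
  - rewrite Rplus_0_r; auto.
  - intros m H. rewrite succ_IZR, <- Rplus_assoc. apply pseudo_next; auto.
  - intros m H. rewrite succ_IZR in H.
    replace (c + IZR m) with (c + (IZR m + 1) - 1) by ring. apply pseudo_prev; auto.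
Qed.

Lemma pseudo_phase k (hk : valid_k k) g : Lambda_motion k g ->
  exists c1, -1 < c1 <= 0 /\ forall z, pseudo k (g (c1 + IZR z)).
Proof.
  intros HT. destruct (exists_pseudo_time k hk g HT) as [c Hc].
  exists (c + IZR (Zfloor (- c))). destruct (Zfloor_bound (- c)). split; [lra|].
  intros z. rewrite Rplus_assoc, <- plus_IZR. apply pseudo_at_integers; auto.
Qed.

Lemma is_derive_shift (f : R -> R) a t l :
  is_derive f (t + a) l -> is_derive (fun s => f (s + a)) t l.
Proof.
  intros H. eapply is_derive_value.
  - apply (is_derive_comp f (fun s => s + a) t l 1 H). auto_derive; auto; ring.
  - unfold scal; simpl; unfold mult; simpl; ring.
Qed.

Lemma continuous_shift (f : R -> R) a t : continuous f (t + a) -> continuous (fun s => f (s + a)) t.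
Proof.
  intros H. apply (continuous_comp (fun s : R => s + a) f); [|exact H].
  apply (ex_derive_continuous (fun s : R => s + a)). auto_derive; auto.
Qed.

Lemma global_trajectory_shift ZZ g a :
  global_trajectory ZZ g -> global_trajectory ZZ (fun t => g (t + a)).
Proof.
  intros [Hc [tt [Hinc [Hu [Hd [Hp Hj]]]]]].
  split; [intros t; split; apply (continuous_shift (fun u => _ (g u))); apply Hc|].
  exists (fun i => tt i - a). split; [|split; [|split; [|split]]].
  - intros i; specialize (Hinc i); lra.
  - intros M. destruct (Hu (M + a)) as [i Hi]. exists i; lra.
  - intros M. destruct (Hd (M + a)) as [i Hi]. exists i; lra.
  - intros i. specialize (Hp i).
    assert (Hic : forall F, integral_curve F g (tt i) (tt (Z.succ i)) ->
               integral_curve F (fun t => g (t + a)) (tt i - a) (tt (Z.succ i) - a)).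
    { intros F HF t Ht. destruct (HF (t + a) ltac:(lra)) as [H1 H2].
      split; apply (is_derive_shift (fun u => _ (g u))); auto. }
    destruct Hp as [[H1 H2]|[[H1 H2]|[H1 H2]]]; [left | right; left | right; right];
      split; auto; intros t Ht; apply H2; lra.
  - intros i. replace (tt i - a + a) with (tt i) by ring. apply Hj.
Qed.

Lemma Omega_shift k (hk : valid_k k) g a : Omega k g -> Omega k (fun t => g (t + a)).
Proof.
  intros HO. split; [apply global_trajectory_shift, HO|].
  rewrite Rplus_0_l. apply (proj1 (Omega_Lambda_motion k hk g HO)).
Qed.

Lemma itin_T1 k g j m : itin k (T1 g) j m <-> itin k g (Z.succ j) m.
Proof.
  unfold itin, T1. rewrite succ_IZR.
  replace (IZR j + / 2 + 1) with (IZR j + 1 + / 2) by ring. tauto.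
Qed.

Lemma sim_sym k g h : sim k g h -> sim k h g.
Proof. intros H j m; specialize (H j m); tauto. Qed.

Lemma sim_trans k g h f : sim k g h -> sim k h f -> sim k g f.
Proof. intros H1 H2 j m; specialize (H1 j m); specialize (H2 j m); tauto. Qed.

Lemma sim_T1 k g1 g2 : sim k g1 g2 -> sim k (T1 g1) (T1 g2).
Proof. intros H j m. rewrite !itin_T1. apply H. Qed.

Lemma sim_T1_inv k g1 g2 : sim k (T1 g1) (T1 g2) -> sim k g1 g2.
Proof. intros H j m. replace j with (Z.succ (Z.pred j)) by lia. rewrite <- !itin_T1. apply H. Qed.

Lemma itin_at_pseudo k (hk : valid_k k) g j m : pseudo k (g (IZR j)) ->
  (itin k g j m <-> arc k m (g (IZR j + /2))).
Proof.
  intros Hp. unfold itin. split.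
  - intros [H|[_ H]]; auto. exfalso; apply (pseudo_not_arc k hk _ m Hp H).
  - intros H; right; auto.
Qed.

Lemma rep_exists k (hk : valid_k k) g : Omega k g ->
  exists h, Omega k h /\ sim k g h /\ pseudo k (h 0).
Proof.
  intros HO. pose proof (Omega_Lambda_motion k hk g HO) as HT.
  destruct (pseudo_phase k hk g HT) as [c1 [Hc1 Hps]].
  exists (fun t => g (t + c1)). split; [apply Omega_shift; auto|]. split.
  - intros j m.
    rewrite (itin_at_pseudo k hk (fun t => g (t + c1)) j m) by (rewrite Rplus_comm; apply Hps).
    destruct (Lambda_motion_seg k hk g HT (c1 + IZR j) (Hps j)) as [l [b [Hl Hs]]].
    assert (Hmid : arc k (seg_arc k l b) (g (IZR j + /2 + c1))).
    { replace (IZR j + /2 + c1) with (c1 + IZR j + /2) by ring.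
      rewrite Hs by lra. apply seg_in_arc; auto; lra. }
    destruct (Req_dec c1 0) as [->|E].
    + rewrite (itin_at_pseudo k hk g j m) by (rewrite <- (Rplus_0_l (IZR j)); apply Hps).
      rewrite Rplus_0_r. reflexivity.
    + assert (Hj : arc k (seg_arc k l b) (g (IZR j))).
      { replace (IZR j) with (c1 + IZR j + - c1) by ring.
        rewrite Hs by lra. apply seg_in_arc; auto; lra. }
      unfold itin. split.
      * intros [H|[Hp _]]; [|exfalso; apply (pseudo_not_arc k hk _ _ Hp Hj)].
        rewrite (arc_unique k hk _ _ _ H Hj). exact Hmid.
      * intros H. left. rewrite (arc_unique k hk _ _ _ H Hmid). exact Hj.
  - simpl. replace (0 + c1) with (c1 + IZR 0) by (simpl; ring). apply Hps.
Qed.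

(* Both trajectories are at pseudo-equilibria at all integer times j, and on [j, j+1] each
   follows the unit segment determined by the arc containing its position at j + 1/2. *)
Lemma rep_unique k (hk : valid_k k) h1 h2 : Omega k h1 -> Omega k h2 ->
  pseudo k (h1 0) -> pseudo k (h2 0) -> sim k h1 h2 -> h1 = h2.
Proof.
  intros O1 O2 P1 P2 S.
  pose proof (Omega_Lambda_motion k hk h1 O1) as M1.
  pose proof (Omega_Lambda_motion k hk h2 O2) as M2.
  apply functional_extensionality. intros t.
  set (j := Zfloor t). pose proof (Zfloor_bound t) as Hj. fold j in Hj.
  assert (Q1 : pseudo k (h1 (IZR j)))
    by (rewrite <- (Rplus_0_l (IZR j)); apply pseudo_at_integers; auto).
  assert (Q2 : pseudo k (h2 (IZR j)))
    by (rewrite <- (Rplus_0_l (IZR j)); apply pseudo_at_integers; auto).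
  destruct (Lambda_motion_seg k hk h1 M1 _ Q1) as [l1 [b1 [Hl1 Hs1]]].
  destruct (Lambda_motion_seg k hk h2 M2 _ Q2) as [l2 [b2 [Hl2 Hs2]]].
  assert (A1 : arc k (seg_arc k l1 b1) (h2 (IZR j + /2))).
  { apply (itin_at_pseudo k hk h2 j); auto. apply S. apply (itin_at_pseudo k hk h1 j); auto.
    rewrite Hs1 by lra. apply seg_in_arc; auto; lra. }
  assert (A2 : arc k (seg_arc k l2 b2) (h2 (IZR j + /2)))
    by (rewrite Hs2 by lra; apply seg_in_arc; auto; lra).
  destruct (seg_arc_inj k hk _ _ _ _ Hl1 Hl2 (arc_unique k hk _ _ _ A1 A2)) as [-> ->].
  replace t with (IZR j + (t - IZR j)) by ring. rewrite Hs1, Hs2 by lra. reflexivity.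
Qed.

Lemma rep_spec k (hk : valid_k k) g : Omega k g ->
  Omega k (rep k g) /\ sim k g (rep k g) /\ pseudo k (rep k g 0).
Proof.
  intros HO. apply (epsilon_spec (inhabits g) (fun h => Omega k h /\ sim k g h /\ pseudo k (h 0))).
  apply rep_exists; auto.
Qed.

Lemma Omega_T1 k (hk : valid_k k) g : Omega k g -> Omega k (T1 g).
Proof. apply Omega_shift; auto. Qed.

Lemma rep_T1 k (hk : valid_k k) g : Omega k g -> rep k (T1 g) = T1 (rep k g).
Proof.
  intros HO. destruct (rep_spec k hk g HO) as [O1 [S1 P1]].
  destruct (rep_spec k hk (T1 g) (Omega_T1 k hk g HO)) as [O2 [S2 P2]].
  apply (rep_unique k hk); auto.
  - apply Omega_T1; auto.
  - unfold T1. rewrite Rplus_0_l. rewrite <- (Rplus_0_l 1).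
    apply (pseudo_next k hk _ (Omega_Lambda_motion k hk _ O1)); auto.
  - apply sim_trans with (T1 g); [apply sim_sym; auto | apply sim_T1; auto].
Qed.

(** * The metric rho_k *)

Definition sumZ (e : Z -> R) : R :=
  e 0%Z + Series (fun n => e (Z.of_nat (S n)) + e (- Z.of_nat (S n))%Z).

(* The ratio 3/4 lies strictly between 1/2 and 1: it dominates 2^-|i| times any term
   growing linearly in |i|, and still gives a convergent series. *)
Definition geom_dominated (e : Z -> R) : Prop :=
  exists C, forall i, 0 <= e i <= C * (3 / 4) ^ Z.abs_nat i.

Lemma pow_le_pow_of_le1 (q : R) m n : 0 <= q <= 1 -> (m <= n)%nat -> q ^ n <= q ^ m.
Proof.
  intros Hq Hmn. replace n with (m + (n - m))%nat by lia. rewrite pow_add.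
  rewrite <- (Rmult_1_r (q ^ m)) at 2. apply Rmult_le_compat_l; [apply pow_le; lra|].
  rewrite <- (pow1 (n - m)). apply pow_incr; lra.
Qed.

Lemma geom_dominated_bound e : geom_dominated e ->
  exists C, 0 <= C /\ forall i, 0 <= e i <= C * (3 / 4) ^ Z.abs_nat i.
Proof.
  intros [C HC]. exists C. split; auto. destruct (HC 0%Z) as [H0 H1]. simpl in H1. lra.
Qed.

Lemma ex_series_dominated e (f : nat -> Z) : geom_dominated e ->
  (forall n, (n <= Z.abs_nat (f n))%nat) -> ex_series (fun n => e (f n)).
Proof.
  intros He Hf. destruct (geom_dominated_bound e He) as [C [HC0 HC]].
  apply (@ex_series_le R_AbsRing R_CompleteNormedModule _ (fun n => C * (3 / 4) ^ n)).
  - intros n. unfold norm; simpl. unfold abs; simpl. destruct (HC (f n)) as [H1 H2].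
    rewrite Rabs_right by lra. eapply Rle_trans; [apply H2|].
    apply Rmult_le_compat_l; auto. apply pow_le_pow_of_le1; [lra | apply Hf].
  - apply (ex_series_scal_l C (fun n => (3 / 4) ^ n)), ex_series_geom.
    rewrite Rabs_right; lra.
Qed.

Lemma sumZ_le a b : (forall i, 0 <= a i <= b i) -> geom_dominated b -> sumZ a <= sumZ b.
Proof.
  intros H Hb. unfold sumZ. apply Rplus_le_compat; [apply H|].
  apply Series_le.
  - intros n. pose proof (H (Z.of_nat (S n))). pose proof (H (- Z.of_nat (S n))%Z). lra.
  - apply (ex_series_plus (fun n => b (Z.of_nat (S n))) (fun n => b (- Z.of_nat (S n))%Z));
      apply ex_series_dominated; auto; intros; lia.
Qed.

Lemma sumZ_scal c a : sumZ (fun i => c * a i) = c * sumZ a.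
Proof.
  unfold sumZ. rewrite Rmult_plus_distr_l, <- Series_scal_l. f_equal.
  apply Series_ext. intros; ring.
Qed.

Lemma sumZ_succ e : geom_dominated e -> sumZ (fun i => e (Z.succ i)) = sumZ e.
Proof.
  intros He. unfold sumZ.
  assert (Hex : forall f : nat -> Z, (forall n, (n <= Z.abs_nat (f n))%nat) ->
                  ex_series (fun n => e (f n))) by (intros; apply ex_series_dominated; auto).
  rewrite (Series_ext _ (fun n => e (Z.of_nat (S (S n))) + e (- Z.of_nat n)%Z))
    by (intros n; f_equal; f_equal; lia).
  rewrite (Series_plus (fun n => e (Z.of_nat (S n))) (fun n => e (- Z.of_nat (S n))%Z))
    by (apply Hex; intros; lia).
  rewrite (Series_plus (fun n => e (Z.of_nat (S (S n)))) (fun n => e (- Z.of_nat n)%Z))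
    by (apply Hex; intros; lia).
  rewrite (Series_incr_1 (fun n => e (Z.of_nat (S n)))) by (apply Hex; intros; lia).
  rewrite (Series_incr_1 (fun n => e (- Z.of_nat n)%Z)) by (apply Hex; intros; lia).
  simpl. ring.
Qed.

Lemma geom_dominated_reindex e (f : Z -> Z) : geom_dominated e ->
  (forall i, (Z.abs_nat i <= S (Z.abs_nat (f i)))%nat) -> geom_dominated (fun i => e (f i)).
Proof.
  intros He Hf. destruct (geom_dominated_bound e He) as [C [HC0 HC]].
  exists (C * (4 / 3)). intros i. destruct (HC (f i)) as [H1 H2]. split; auto.
  eapply Rle_trans; [apply H2|]. rewrite Rmult_assoc. apply Rmult_le_compat_l; auto.
  pose proof (pow_le_pow_of_le1 (3 / 4) _ _ ltac:(lra) (Hf i)) as H. simpl in H. lra.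
Qed.

Lemma geom_dominated_scal c e : 0 <= c -> geom_dominated e -> geom_dominated (fun i => c * e i).
Proof.
  intros Hc He. destruct (geom_dominated_bound e He) as [C [HC0 HC]].
  exists (c * C). intros i. destruct (HC i). split; [nra|].
  rewrite Rmult_assoc. apply Rmult_le_compat_l; auto.
Qed.

Lemma INR_succ_le_pow m : INR m + 1 <= 2 * (3 / 2) ^ m.
Proof.
  induction m; [simpl; lra|]. rewrite S_INR, <- tech_pow_Rmult.
  assert (1 <= (3 / 2) ^ m) by (apply pow_R1_Rle; lra). lra.
Qed.

Lemma geom_dominated_weighted (D : Z -> R) K : 0 <= K ->
  (forall i, 0 <= D i <= K + 2 * INR (Z.abs_nat i)) ->
  geom_dominated (fun i => (/ 2) ^ Z.abs_nat i * D i).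
Proof.
  intros HK HD. exists (2 * (K + 2)). intros i. destruct (HD i) as [H1 H2].
  set (m := Z.abs_nat i) in *.
  pose proof (pow_le (/ 2) m ltac:(lra)).
  pose proof (INR_succ_le_pow m). pose proof (pos_INR m).
  split; [nra|].
  replace ((3 / 4) ^ m) with ((/ 2) ^ m * (3 / 2) ^ m)
    by (rewrite <- Rpow_mult_distr; f_equal; field).
  apply Rle_trans with ((/ 2) ^ m * ((K + 2) * (INR m + 1))); [apply Rmult_le_compat_l; nra|].
  replace (2 * (K + 2) * ((/ 2) ^ m * (3 / 2) ^ m)) with ((/ 2) ^ m * ((K + 2) * (2 * (3 / 2) ^ m)))
    by ring.
  apply Rmult_le_compat_l; [lra|]. apply Rmult_le_compat_l; lra.
Qed.

Lemma euclid_le_abs a b : euclid a b <= Rabs (fst a - fst b) + Rabs (snd a - snd b).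
Proof.
  unfold euclid. set (u := fst a - fst b). set (v := snd a - snd b).
  pose proof (Rabs_pos u). pose proof (Rabs_pos v).
  rewrite <- (sqrt_pow2 (Rabs u + Rabs v)) by lra. apply sqrt_le_1_alt.
  rewrite <- (pow2_abs u), <- (pow2_abs v). nra.
Qed.

Lemma euclid_sym a b : euclid a b = euclid b a.
Proof. unfold euclid. f_equal. ring. Qed.

Lemma dist_to_set_bounds a B : (exists b, B b) ->
  0 <= dist_to_set a B /\ forall b, B b -> dist_to_set a B <= euclid a b.
Proof.
  intros [b0 Hb0]. unfold dist_to_set.
  set (E := fun r => exists b, B b /\ r = euclid a b).
  destruct (Glb_Rbar_correct E) as [H1 H2].
  assert (H0 : Rbar_le 0 (Glb_Rbar E)) by (apply H2; intros x [b [_ ->]]; simpl; apply sqrt_pos).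
  assert (Hup : forall b, B b -> Rbar_le (Glb_Rbar E) (euclid a b))
    by (intros b Hb; apply H1; exists b; auto).
  specialize (Hup b0 Hb0) as Hup0.
  destruct (Glb_Rbar E) as [r| |]; simpl in *; try contradiction. split; auto.
Qed.

Lemma Lub_Rbar_bounds (S : R -> Prop) K : (exists r, S r) -> (forall r, S r -> 0 <= r <= K) ->
  0 <= real (Lub_Rbar S) <= K.
Proof.
  intros [r0 Hr0] HS. destruct (Lub_Rbar_correct S) as [H1 H2].
  assert (Hl : Rbar_le (Lub_Rbar S) K) by (apply H2; intros x Hx; simpl; apply HS; auto).
  assert (Hr : Rbar_le r0 (Lub_Rbar S)) by (apply H1; auto).
  specialize (HS r0 Hr0).
  destruct (Lub_Rbar S) as [r| |]; simpl in *; try contradiction. lra.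
Qed.

Lemma hausdorff_bounds A B K : (exists a, A a) -> (exists b, B b) ->
  (forall a b, A a -> B b -> euclid a b <= K) -> 0 <= hausdorff A B <= K.
Proof.
  intros [a0 Ha0] [b0 Hb0] HK. unfold hausdorff.
  assert (L1 : 0 <= real (Lub_Rbar (fun r => exists a, A a /\ r = dist_to_set a B)) <= K).
  { apply Lub_Rbar_bounds; [exists (dist_to_set a0 B); exists a0; auto|].
    intros r [a [Ha ->]]. destruct (dist_to_set_bounds a B (ex_intro _ b0 Hb0)) as [D1 D2].
    split; auto. eapply Rle_trans; [apply (D2 b0 Hb0) | apply HK; auto]. }
  assert (L2 : 0 <= real (Lub_Rbar (fun r => exists b, B b /\ r = dist_to_set b A)) <= K).
  { apply Lub_Rbar_bounds; [exists (dist_to_set b0 A); exists b0; auto|].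
    intros r [b [Hb ->]]. destruct (dist_to_set_bounds b A (ex_intro _ a0 Ha0)) as [D1 D2].
    split; auto. eapply Rle_trans; [apply (D2 a0 Ha0)|]. rewrite euclid_sym. apply HK; auto. }
  split; [eapply Rle_trans; [apply L1 | apply Rmax_l] | apply Rmax_lub; lra].
Qed.

Definition window_dist k (g h : R -> pt) (i : Z) : R :=
  hausdorff (image_on (rep k g) (IZR i) (IZR i + 1)) (image_on (rep k h) (IZR i) (IZR i + 1)).

Lemma Rabs_in_window i t : IZR i <= t <= IZR i + 1 -> Rabs t <= INR (Z.abs_nat i) + 1.
Proof.
  intros Ht. rewrite INR_IZR_INZ, Zabs2Nat.id_abs, abs_IZR.
  unfold Rabs; destruct (Rcase_abs t); destruct (Rcase_abs (IZR i)); lra.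
Qed.

(* The horizontal speed is 1, so unit windows of two trajectories drift apart at most
   linearly in |i|, while the vertical coordinates stay bounded on Lambda_k. *)
Lemma window_dist_bound k (hk : valid_k k) g h : Omega k g -> Omega k h ->
  exists K, 0 <= K /\ forall i, 0 <= window_dist k g h i <= K + 2 * INR (Z.abs_nat i).
Proof.
  intros Og Oh.
  destruct (rep_spec k hk g Og) as [Og' _]. destruct (rep_spec k hk h Oh) as [Oh' _].
  pose proof (Omega_Lambda_motion k hk _ Og') as Tg.
  pose proof (Omega_Lambda_motion k hk _ Oh') as Th.
  set (rg := rep k g) in *. set (rh := rep k h) in *.
  destruct (Lambda_snd_bounded k) as [B HB].
  assert (HB0 : 0 <= B)
    by (pose proof (HB _ (proj1 Tg 0)); pose proof (Rabs_pos (snd (rg 0))); lra).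
  set (C := Rabs (fst (rg 0) - fst (rh 0))).
  exists (C + 2 + 2 * B). split; [pose proof (Rabs_pos (fst (rg 0) - fst (rh 0))); unfold C; lra|].
  intros i. unfold window_dist. fold rg rh.
  apply hausdorff_bounds;
    [exists (rg (IZR i)), (IZR i); split; [lra | auto]
    | exists (rh (IZR i)), (IZR i); split; [lra | auto] |].
  intros a b [t [Ht ->]] [t' [Ht' ->]]. eapply Rle_trans; [apply euclid_le_abs|].
  pose proof (Lambda_motion_fst_lipschitz k rg Tg t 0) as Lg.
  pose proof (Lambda_motion_fst_lipschitz k rh Th 0 t') as Lh.
  rewrite Rminus_0_r in Lg. rewrite Rminus_0_l, Rabs_Ropp in Lh.
  pose proof (Rabs_in_window i t Ht). pose proof (Rabs_in_window i t' Ht').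
  pose proof (HB _ (proj1 Tg t)). pose proof (HB _ (proj1 Th t')).
  pose proof (Rabs_triang (fst (rg t) - fst (rg 0)) (fst (rg 0) - fst (rh t'))).
  pose proof (Rabs_triang (fst (rg 0) - fst (rh 0)) (fst (rh 0) - fst (rh t'))).
  pose proof (Rabs_triang (snd (rg t)) (- snd (rh t'))). rewrite Rabs_Ropp in *.
  replace (fst (rg t) - fst (rg 0) + (fst (rg 0) - fst (rh t')))
    with (fst (rg t) - fst (rh t')) in * by ring.
  replace (fst (rg 0) - fst (rh 0) + (fst (rh 0) - fst (rh t')))
    with (fst (rg 0) - fst (rh t')) in * by ring.
  replace (snd (rg t) + - snd (rh t')) with (snd (rg t) - snd (rh t')) in * by ring.
  unfold C. lra.
Qed.

Lemma image_on_T1 r i :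
  image_on (T1 r) (IZR i) (IZR i + 1) = image_on r (IZR (Z.succ i)) (IZR (Z.succ i) + 1).
Proof.
  apply functional_extensionality; intros q. apply propositional_extensionality.
  unfold image_on, T1. rewrite succ_IZR. split.
  - intros [t [Ht ->]]. exists (t + 1). split; [lra | auto].
  - intros [t [Ht ->]]. exists (t - 1). split; [lra|]. f_equal; ring.
Qed.

Lemma rho_T1 k (hk : valid_k k) g h : Omega k g -> Omega k h ->
  rho k (T1 g) (T1 h) = sumZ (fun i => (/ 2) ^ Z.abs_nat i * window_dist k g h (Z.succ i)).
Proof.
  intros Og Oh. unfold rho. fold (sumZ (rho_term k (T1 g) (T1 h))). f_equal. apply functional_extensionality; intros i. unfold rho_term, window_dist.
  rewrite (rep_T1 k hk g Og), (rep_T1 k hk h Oh), !image_on_T1. reflexivity.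
Qed.

Lemma half_pow_le a b : (b <= S a)%nat -> (/ 2) ^ a <= 2 * (/ 2) ^ b.
Proof.
  intros H. pose proof (pow_le_pow_of_le1 (/ 2) b (S a) ltac:(lra) H).
  rewrite <- tech_pow_Rmult in H0. lra.
Qed.

Lemma rho_T1_le k (hk : valid_k k) g h : Omega k g -> Omega k h ->
  rho k (T1 g) (T1 h) <= 2 * rho k g h.
Proof.
  intros Og Oh. destruct (window_dist_bound k hk g h Og Oh) as [K [HK HD]].
  set (e := fun i => (/ 2) ^ Z.abs_nat i * window_dist k g h i).
  assert (He : geom_dominated e) by (apply (geom_dominated_weighted _ K); auto).
  rewrite (rho_T1 k hk g h Og Oh).
  change (rho k g h) with (sumZ e). rewrite <- (sumZ_succ e He), <- sumZ_scal.
  apply sumZ_le.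
  - intros i. destruct (HD (Z.succ i)). pose proof (pow_le (/ 2) (Z.abs_nat i) ltac:(lra)).
    split; [nra|]. unfold e. rewrite <- Rmult_assoc.
    apply Rmult_le_compat_r; auto. apply half_pow_le; lia.
  - apply geom_dominated_scal; [lra|]. apply (geom_dominated_reindex e Z.succ He). intros; lia.
Qed.

Lemma rho_le_T1 k (hk : valid_k k) g h : Omega k g -> Omega k h ->
  rho k g h <= 2 * rho k (T1 g) (T1 h).
Proof.
  intros Og Oh. destruct (window_dist_bound k hk g h Og Oh) as [K [HK HD]].
  set (e := fun i => (/ 2) ^ Z.abs_nat i * window_dist k g h (Z.succ i)).
  assert (He : geom_dominated e).
  { apply (geom_dominated_weighted _ (K + 2)); [lra|]. intros i. destruct (HD (Z.succ i)).
    assert (INR (Z.abs_nat (Z.succ i)) <= INR (Z.abs_nat i) + 1)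
      by (rewrite <- S_INR; apply le_INR; lia).
    split; lra. }
  assert (Hpred : geom_dominated (fun i => e (Z.pred i)))
    by (apply (geom_dominated_reindex e Z.pred He); intros; lia).
  assert (Hshift : sumZ e = sumZ (fun i => e (Z.pred i))).
  { rewrite <- (sumZ_succ _ Hpred). f_equal. apply functional_extensionality; intros i.
    rewrite Z.pred_succ. reflexivity. }
  change (rho k g h) with (sumZ (fun i => (/ 2) ^ Z.abs_nat i * window_dist k g h i)).
  rewrite (rho_T1 k hk g h Og Oh). fold e. rewrite Hshift, <- sumZ_scal.
  apply sumZ_le; [|apply geom_dominated_scal; [lra | exact Hpred]].
  intros i. unfold e. rewrite Z.succ_pred. pose proof (pow_le (/ 2) (Z.abs_nat i) ltac:(lra)).
  destruct (HD i). split; [nra|].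
  rewrite <- Rmult_assoc. apply Rmult_le_compat_r; auto. apply half_pow_le; lia.
Qed.

Theorem mainTheorem13 (k : option nat) (hk : valid_k k) :
  (* T1 maps Omega_k to itself *)
  (forall g, Omega k g -> Omega k (T1 g)) /\
  (* well defined on classes *)
  (forall g1 g2, Omega k g1 -> Omega k g2 -> sim k g1 g2 -> sim k (T1 g1) (T1 g2)) /\
  (* injective on classes *)
  (forall g1 g2, Omega k g1 -> Omega k g2 -> sim k (T1 g1) (T1 g2) -> sim k g1 g2) /\
  (* surjective on classes *)
  (forall g, Omega k g -> exists h, Omega k h /\ sim k (T1 h) g) /\
  (* continuous w.r.t. rho_k *)
  (forall g eps, Omega k g -> 0 < eps -> exists delta, 0 < delta /\
     forall h, Omega k h -> rho k g h < delta -> rho k (T1 g) (T1 h) < eps) /\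
  (* inverse continuous w.r.t. rho_k *)
  (forall g eps, Omega k g -> 0 < eps -> exists delta, 0 < delta /\
     forall h, Omega k h -> rho k (T1 g) (T1 h) < delta -> rho k g h < eps).
Proof.
  split; [|split; [|split; [|split; [|split]]]].
  - apply Omega_T1; auto.
  - intros g1 g2 _ _. apply sim_T1.
  - intros g1 g2 _ _. apply sim_T1_inv.
  - intros g Og. exists (fun t => g (t + -1)). split; [apply Omega_shift; auto|].
    replace (T1 (fun t => g (t + -1))) with g
      by (apply functional_extensionality; intros t; unfold T1; f_equal; ring).
    intros j m; reflexivity.
  - intros g eps Og Heps. exists (eps / 2). split; [lra|]. intros h Oh Hr.
    pose proof (rho_T1_le k hk g h Og Oh). lra.
  - intros g eps Og Heps. exists (eps / 2). split; [lra|]. intros h Oh Hr.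
    pose proof (rho_le_T1 k hk g h Og Oh). lra.
Qed.
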